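(* Let the system $x^+=f(x,u)$, $\zeta=g(x,u)$ and its associated system $z^+=\psi_x(z,v)$, $\eta=\psi_u(z,v)$ be as in the context. Then the associated system is flat (in the sense defined in the context) if and only if the original system is flat. More precisely, suppose the original system is flat with flat output $$y=\varphi(\zeta_{[-Q_1,-1]},x,u,u_{[1,Q_2]})$$ and parameterization $x=F_x(y_{[-R_1,R_2-1]})$, $u=F_u(y_{[-R_1,R_2]})$. Then the associated system is flat with flat output $$\hat y=\varphi\big(v_{[Q_1,1]},\,\psi_x(z,v),\,\psi_u(z,v),\,\eta_{[-1,-Q_2]}\big)=\hat\varphi(\eta_{[-Q_2,-1]},z,v,v_{[1,Q_1]}),$$ obtained from $\varphi$ by replacing each $\zeta_{[-j]}$ by $v_{[j]}$ ($1\le j\le Q_1$), $x$ by $\psi_x(z,v)$, $u$ by $\psi_u(z,v)$, and each $u_{[j]}$ by $\eta_{[-j]}$ ($1\le j\le Q_2$), componentwise. Its trajectories are related to those of $y$, for any fixed $k$, by $\hat y(k+l)=y(k-l)$, $l\in\mathbb{Z}$ (this imposes no constraint on $\hat y$). The corresponding parameterization of the associated system is $$z=F_x(\hat y_{[R_1-1,-R_2]})=F_z(\hat y_{[-R_2,R_1-1]}),\qquad v=g\big(F_x(\hat y_{[R_1,-R_2+1]}),F_u(\hat y_{[R_1,-R_2]})\big)=F_v(\hat y_{[-R_2,R_1]}),$$ and $\eta=F_u(\hat y_{[R_1,-R_2]})$; here $F_x(\hat y_{[R_1-1,-R_2]})$ means $F_x$ with its argument $y_{[j]}$ replaced by $\hat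 y_{[-j-1]}$ for $j\in[-R_1,R_2-1]$, and $F_x(\hat y_{[R_1,-R_2+1]})$, $F_u(\hat y_{[R_1,-R_2]})$ mean $F_x$, $F_u$ with $y_{[j]}$ replaced by $\hat y_{[-j]}$ (componentwise for multi-indices). Conversely, if the associated system is flat with flat output $\hat y=\hat\varphi(\eta_{[-Q_2,-1]},z,v,v_{[1,Q_1]})$, then the original system is flat with flat output $$y=\hat\varphi\big(u_{[Q_2,1]},f(x,u),g(x,u),\zeta_{[-1,-Q_1]}\big),$$ obtained by replacing each $\eta_{[-j]}$ by $u_{[j]}$, $z$ by $f(x,u)$, $v$ by $g(x,u)$, and each $v_{[j]}$ by $\zeta_{[-j]}$.
   Context: Consider a nonlinear time-invariant discrete-time system $x^{i,+}=f^i(x,u)$, $i=1,\dots,n$, with $x\in\mathbb{R}^n$, $u\in\mathbb{R}^m$, smooth $f$, $\operatorname{rank}(\partial_u f)=m$, and the submersivity condition $\operatorname{rank}(\partial_{(x,u)}f)=n$. Choose $m$ smooth functions $g(x,u)$ such that $(x,u)\mapsto(f(x,u),g(x,u))$ is a local diffeomorphism, with local inverse $x=\psi_x(x^+,\zeta)$, $u=\psi_u(x^+,\zeta)$. The associated system is $z^+=\psi_x(z,v)$, $\eta=\psi_u(z,v)$ with state $z\in\mathbb{R}^n$, input $v\in\mathbb{R}^m$, output $\eta\in\mathbb{R}^m$; its trajectories correspond one-to-one to those of $x^+=f(x,u)$, $\zeta=g(x,u)$ via $x(k+l)=z(k-l+1)$, $u(k+l)=\eta(k-l)$, $\zeta(k+l)=v(k-l)$.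 Notation: for a variable $w$, $w_{[\alpha]}$ denotes its $\alpha$-th forward shift ($w_{[\alpha]}(k)=w(k+\alpha)$) and $w_{[-\alpha]}$ its $\alpha$-th backward shift, $\alpha\ge0$; $w^+=w_{[1]}$. For a multi-component $y=(y^1,\dots,y^m)$ and multi-indices $S_1=(s_{1,1},\dots,s_{1,m})$, $S_2=(s_{2,1},\dots,s_{2,m})$, $y_{[-S_1,S_2]}$ denotes all $y^j_{[i]}$ with $-s_{1,j}\le i\le s_{2,j}$; similarly $\zeta_{[-Q_1,-1]}$, $u_{[1,Q_2]}$ etc.; $y_{[R_2-1]}$ means the shifts $y^j_{[r_{2,j}-1]}$, etc. Flatness (Definition): the system $x^+=f(x,u)$ is flat around an equilibrium $(x_0,u_0)$ if there exist an $m$-tuple of smooth functions $y^j=\varphi^j(\zeta_{[-Q_1,-1]},x,u,u_{[1,Q_2]})$, $j=1,\dots,m$ (the flat output; here $\zeta=g(x,u)$), and smooth maps $x=F_x(y_{[-R_1,R_2-1]})$, $u=F_u(y_{[-R_1,R_2]})$ (the parameterization) such that locally the $n+m$ coordinate functions $x,u$ are expressed by the flat output and its backward and forward shifts; equivalently, these maps establish a one-to-one correspondence between trajectories $(x(k),u(k))$ of the system and arbitrary sequences $y(k)\in\mathbb{R}^m$ (no difference equation imposed on $y$), where $x(k),u(k)$ may depend on finitely many past and future values of $y$ and vice versa. For the associated system, the same definition applies with $(z,v,\eta)$ in place of $(x,u,\zeta)$, $\psi_x$ in place of $f$, and $\psi_u$ in place of $g$. *)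

From HB Require Import structures.
From mathcomp Require Import all_boot all_order all_algebra.
From mathcomp Require Import all_classical all_reals all_analysis.
Set Implicit Arguments. Unset Strict Implicit. Unset Printing Implicit Defensive.
Import Order.TTheory GRing.Theory Num.Theory.
Local Open Scope classical_set_scope.
Local Open Scope ring_scope.

Fixpoint Ck {R : realType} {V W : normedModType R} (A : set V) (k : nat)
    (f : V -> W) {struct k} : Prop :=
  match k with
  | 0 => forall x, A x -> {for x, continuous f}
  | k'.+1 => (forall x, A x -> differentiable f x) /\
             (forall v : V, Ck A k' (fun x => 'D_v f x))
  end.

Definition smooth_on {R : realType} {V W : normedModType R} (A : set V)
    (f : V -> W) : Prop := forall k, Ck A k f.

Definition smooth_near {R : realType} {V W : normedModType R} (p : V)
    (f : V -> W) : Prop := exists A : set V, [/\ open A, A p & smooth_on A f].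

Definition win {R : realType} {p : nat} (s : int -> 'rV[R]_p) (a : int) (L : nat)
  : 'M[R]_(L, p) := \matrix_(i < L, j < p) s (a + (i : nat)%:Z) 0 j.

Definition cwin {R : realType} {p : nat} (L : nat) (c : 'rV[R]_p) : 'M[R]_(L, p) :=
  win (fun _ => c) 0 L.

Definition rev_rows {R : realType} {L p : nat} (A : 'M[R]_(L, p)) : 'M[R]_(L, p) :=
  \matrix_(i < L, j < p) A (rev_ord i) j.

(* Flat output  y(k) = phi(zeta_[-Q1,-1], x, u, u_[1,Q2])  encoded as  *)
(*   phi (win zeta (k-Q1) Q1, x k, u k, win u (k+1) Q2);               *)
(* parameterization                                                    *)
(*   x(k) = Fx (y_[-R1, R2-1]) = Fx (win y (k-R1) (R1+R2)),            *)
(*   u(k) = Fu (y_[-R1, R2])   = Fu (win y (k-R1) (R1+R2).+1).         *)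
Section Flat.
Context {R : realType} {n m : nat}.
Local Notation X := ('rV[R]_n : normedModType R).
Local Notation U := ('rV[R]_m : normedModType R).

Definition flat_param (F : X * U -> X) (G : X * U -> U) (x0 : X) (u0 : U)
  (Q1 Q2 : nat) (phi : 'M[R]_(Q1, m) * X * U * 'M[R]_(Q2, m) -> U)
  (R1 R2 : nat) (Fx : 'M[R]_(R1 + R2, m) -> X) (Fu : 'M[R]_((R1 + R2).+1, m) -> U)
  : Prop :=
  let phi0 := (cwin Q1 (G (x0, u0)), x0, u0, cwin Q2 u0) in
  let y0 := phi phi0 in
  [/\ smooth_near phi0 phi,
      smooth_near (cwin (R1 + R2) y0) Fx,
      smooth_near (cwin (R1 + R2).+1 y0) Fu &
  exists (N : set (X * U : normedModType R)) (M : set U),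
  [/\ open N /\ N (x0, u0), open M /\ M y0,
    (forall (x : int -> X) (u : int -> U),
      (forall k, x (k + 1) = F (x k, u k)) ->
      (forall k, N (x k, u k)) ->
      let y := fun k => phi (win (fun l => G (x l, u l)) (k - Q1%:Z) Q1,
                             x k, u k, win u (k + 1) Q2) in
      forall k, x k = Fx (win y (k - R1%:Z) (R1 + R2)) /\
                u k = Fu (win y (k - R1%:Z) (R1 + R2).+1)) &
    (forall y : int -> U, (forall k, M (y k)) ->
      let x := fun k => Fx (win y (k - R1%:Z) (R1 + R2)) in
      let u := fun k => Fu (win y (k - R1%:Z) (R1 + R2).+1) in
      [/\ forall k, x (k + 1) = F (x k, u k),
          forall k, N (x k, u k) &
          forall k, y k = phi (win (fun l => G (x l, u l)) (k - Q1%:Z) Q1,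
                               x k, u k, win u (k + 1) Q2)])]].

Definition flat_output (F : X * U -> X) (G : X * U -> U) (x0 : X) (u0 : U)
  (Q1 Q2 : nat) (phi : 'M[R]_(Q1, m) * X * U * 'M[R]_(Q2, m) -> U) : Prop :=
  exists (R1 R2 : nat) (Fx : 'M[R]_(R1 + R2, m) -> X)
         (Fu : 'M[R]_((R1 + R2).+1, m) -> U),
    flat_param F G x0 u0 phi Fx Fu.

Definition flat (F : X * U -> X) (G : X * U -> U) (x0 : X) (u0 : U) : Prop :=
  exists (Q1 Q2 : nat) (phi : 'M[R]_(Q1, m) * X * U * 'M[R]_(Q2, m) -> U),
    flat_output F G x0 u0 phi.

(* hat phi (eta_[-Q2,-1], z, v, v_[1,Q1])
     := phi (v_[Q1,1], psi_x(z,v), psi_u(z,v), eta_[-1,-Q2])           *)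
Definition hat_phi (psix : X * U -> X) (psiu : X * U -> U) (Q1 Q2 : nat)
  (phi : 'M[R]_(Q1, m) * X * U * 'M[R]_(Q2, m) -> U)
  : 'M[R]_(Q2, m) * X * U * 'M[R]_(Q1, m) -> U :=
  fun w => match w with (E, z, v, V) =>
    phi (rev_rows V, psix (z, v), psiu (z, v), rev_rows E) end.

(* F_z (yh_[-R2, R1-1]) := Fx with y_[j] replaced by yh_[-j-1] *)
Definition Fz_of (R1 R2 : nat) (Fx : 'M[R]_(R1 + R2, m) -> X)
  : 'M[R]_(R2 + R1, m) -> X :=
  fun W => Fx (\matrix_(i < R1 + R2, j < m)
                  W (rev_ord (cast_ord (addnC R1 R2) i)) j).

(* F_v (yh_[-R2, R1]) := g (Fx(y_[j] := yh_[-j]), Fu(y_[j] := yh_[-j])) *)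
Definition Fv_of (G : X * U -> U) (R1 R2 : nat) (Fx : 'M[R]_(R1 + R2, m) -> X)
  (Fu : 'M[R]_((R1 + R2).+1, m) -> U) : 'M[R]_((R2 + R1).+1, m) -> U :=
  fun W =>
    G (Fx (\matrix_(i < R1 + R2, j < m)
             W (cast_ord (congr1 S (addnC R1 R2))
                         (rev_ord (widen_ord (leqnSn _) i))) j),
       Fu (\matrix_(i < (R1 + R2).+1, j < m)
             W (cast_ord (congr1 S (addnC R1 R2)) (rev_ord i)) j)).

(* phi (zeta_[-Q1,-1], x, u, u_[1,Q2])
     := hat phi (u_[Q2,1], f(x,u), g(x,u), zeta_[-1,-Q1])              *)
Definition back_phi (F : X * U -> X) (G : X * U -> U) (Q2 Q1 : nat)
  (hphi : 'M[R]_(Q2, m) * X * U * 'M[R]_(Q1, m) -> U)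
  : 'M[R]_(Q1, m) * X * U * 'M[R]_(Q2, m) -> U :=
  fun w => match w with (Z, x, u, Uw) =>
    hphi (rev_rows Uw, F (x, u), G (x, u), rev_rows Z) end.

End Flat.

From HB Require Import structures.
From mathcomp Require Import all_boot all_order all_algebra.
From mathcomp Require Import all_classical all_reals all_analysis.
From mathcomp Require Import zify.
Import Order.TTheory GRing.Theory Num.Theory.
Local Open Scope classical_set_scope.
Local Open Scope ring_scope.

(* Reversing time turns trajectories of x^+ = f(x,u) into trajectories of the
   associated system: where (f,g) is inverted by (psix,psiu), the sequences
   z(k) = f(x(-k),u(-k)), v(k) = g(x(-k),u(-k)) satisfy z(k+1) = psix(z(k),v(k))
   and psiu(z(k),v(k)) = u(-k).  Read along the reversed time axis, a flat output
   y of the original system thus gives the flat output yh(k) = y(-k) of the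
   associated system, parameterized by F_x, F_u applied to reversed windows; these
   maps are smooth by the chain rule, all spaces being finite-dimensional.  The
   associated system of the associated system is the original one, so the converse
   is the same construction with the roles of (f,g) and (psix,psiu) exchanged. *)

(* Scaling as a bilinear map, so that [differentiable_bilin] gives the product
   rule for [x |-> a x *: F x]. *)
Definition scale_bilin {R : realType} {W : normedModType R} (a : R^o) (w : W) : W :=
  a *: w.

Lemma scale_bilin_is_bilinear (R : realType) (W : normedModType R) :
  bilinear_for (GRing.Scale.Law.clone _ _ *:%R _) (GRing.Scale.Law.clone _ _ *:%R _)
    (@scale_bilin R W).
Proof.
split=> [w|a] b x y /=; rewrite /scale_bilin.
- by rewrite scalerDl scalerA.
- by rewrite scalerDr !scalerA mulrC.
Qed.

HB.instance Definition _ (R : realType) (W : normedModType R) :=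
  bilinear_isBilinear.Build R R^o W W _ _ (@scale_bilin R W)
    (@scale_bilin_is_bilinear R W).

Section Smoothness.
Context {R : realType}.

Lemma near_eq_continuous {T : topologicalType} {W : normedModType R} (f g : T -> W) x :
  (\forall y \near x, f y = g y) -> {for x, continuous f} -> {for x, continuous g}.
Proof.
move=> fg cf; have fgx : f x = g x := nbhs_singleton fg.
suff : g @ x --> f x by rewrite fgx.
by apply: cvg_trans cf; apply: near_eq_cvg; apply: filterS fg.
Qed.

Lemma near_eq_differentiable {V W : normedModType R} (f g : V -> W) x :
  (\forall y \near x, f y = g y) -> differentiable f x -> differentiable g x.
Proof.
have diff_near0 (h : V -> W) : (\forall y \near x, h y = 0) -> differentiable h x.
  move=> h0; have hx : h x = 0 := nbhs_singleton h0.
  have expand : h \o shift x = cst (h x) + \0 +o_ 0 id.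
    apply/eqaddoP => _/posnumP[e]; move: h0; rewrite (near_shift 0) subr0.
    apply: filterS => y /= hy.
    by rewrite !fctE /= hy hx addr0 subrr normr0 mulr_ge0.
  have d0 : 'd h x = \0 :> (V -> W).
    by apply: diff_unique expand => y; apply: cvg_cst.
  by apply/diff_locallyP; rewrite d0; split=> [y|]; [apply: cvg_cst|apply: expand].
move=> fg df; have -> : g = f + (g - f) by apply/funext => y; rewrite !fctE addrC subrK.
apply: differentiableD => //; apply: diff_near0.
by apply: filterS fg => y fy; rewrite !fctE fy subrr.
Qed.

Lemma openI_preimage {T S : topologicalType} (A : set T) (B : set S) (h : T -> S) :
  open A -> (forall x, A x -> {for x, continuous h}) -> open B -> open (A `&` h @^-1` B).
Proof.
move=> oA ch oB; rewrite openE => x [Ax Bhx]; apply: filterI.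
  exact: open_nbhs_nbhs.
by apply: (ch x Ax); apply: open_nbhs_nbhs.
Qed.

Lemma eq_Ck {V W : normedModType R} (A : set V) k (f g : V -> W) : open A ->
  (forall x, A x -> f x = g x) -> Ck A k f -> Ck A k g.
Proof.
move=> oA; have near_A x : A x -> \forall y \near x, A y by move=> Ax; apply: open_nbhs_nbhs.
elim: k f g => [|k IH] f g fg /=.
- move=> cf x Ax; apply: near_eq_continuous (cf x Ax).
  by apply: filterS (near_A x Ax); apply: fg.
move=> [df dD]; split=> [x Ax|v].
  by apply: near_eq_differentiable (df x Ax); apply: filterS (near_A x Ax); apply: fg.
apply: IH (dD v) => x Ax; apply: near_eq_derive.
by apply: filterS (near_A x Ax); apply: fg.
Qed.

Lemma CkW {V W : normedModType R} {A : set V} {k : nat} {f : V -> W} :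
  Ck A k.+1 f -> Ck A k f.
Proof.
elim: k f => [|k IH] f [df dD] /=.
  by move=> x Ax; apply: differentiable_continuous; apply: df.
by split=> // v; apply: IH; apply: dD.
Qed.

Lemma Ck_subset {V W : normedModType R} (A B : set V) k (f : V -> W) :
  B `<=` A -> Ck A k f -> Ck B k f.
Proof.
move=> BA; elim: k f => [|k IH] f /=; first by move=> cf x /BA; apply: cf.
by move=> [df dD]; split=> [x /BA|v]; [apply: df|apply: IH].
Qed.

Lemma Ck_cst {V W : normedModType R} (A : set V) k (c : W) : Ck A k (fun=> c).
Proof.
elim: k c => [|k IH] c /=; first by move=> x _; apply: cvg_cst.
split=> [x _|v]; first exact: differentiable_cst.
by under eq_fun do rewrite derive_cst; apply: IH.
Qed.

Lemma CkD {V W : normedModType R} (A : set V) k (f g : V -> W) : open A ->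
  Ck A k f -> Ck A k g -> Ck A k (fun x => f x + g x).
Proof.
move=> oA; elim: k f g => [|k IH] f g /=.
  by move=> cf cg x Ax; apply: continuousD; [apply: cf|apply: cg].
move=> [df dDf] [dg dDg]; split=> [x Ax|v].
  by apply: differentiableD; [apply: df|apply: dg].
apply: (@eq_Ck _ _ _ _ (fun x => 'D_v f x + 'D_v g x)) => //; last exact: IH.
by move=> x Ax; rewrite -deriveD //; apply/diff_derivable; [apply: df|apply: dg].
Qed.

Lemma Ck_sum {V W : normedModType R} (A : set V) k (I : finType) (h : I -> V -> W) :
  open A -> (forall i, Ck A k (h i)) -> Ck A k (fun x => \sum_i h i x).
Proof.
move=> oA Ch; suff : forall s, Ck A k (fun x => \sum_(i <- s) h i x) by apply.
elim=> [|i s IHs]; first by under eq_fun do rewrite big_nil; apply: Ck_cst.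
by under eq_fun do rewrite big_cons; apply: CkD.
Qed.

Lemma differentiable_derive_scale {V W : normedModType R} {a : V -> R^o} {F : V -> W} {x : V} :
  differentiable a x -> differentiable F x ->
  differentiable (fun y => a y *: F y) x /\
  forall v, 'D_v (fun y => a y *: F y) x = 'D_v a x *: F x + a x *: 'D_v F x.
Proof.
move=> da dF.
have -> : (fun y => a y *: F y) =
  (fun p : R^o * W => scale_bilin p.1 p.2) \o (fun y => (a y, F y)) by [].
have cs : continuous (fun p : R^o * W => scale_bilin p.1 p.2) by apply: scale_continuous.
have dp := differentiable_pair da dF.
have db := differentiable_bilin (a x, F x) cs.
have dc := differentiable_comp dp db.
split=> // v; rewrite (deriveE v dc) (diff_comp dp db) diff_bilin //=.
by rewrite (diff_pair da dF) /= /scale_bilin (deriveE v da) (deriveE v dF) addrC.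
Qed.

Lemma CkZ {V W : normedModType R} (A : set V) k (a : V -> R^o) (F : V -> W) :
  open A -> Ck A k a -> Ck A k F -> Ck A k (fun x => a x *: F x).
Proof.
move=> oA; elim: k a F => [|k IH] a F /=.
  by move=> ca cF x Ax; apply: continuousZ; [apply: ca|apply: cF].
move=> [da dDa] [dF dDF]; split=> [x Ax|v].
  by case: (differentiable_derive_scale (da x Ax) (dF x Ax)).
apply: (@eq_Ck _ _ _ _ (fun x => 'D_v a x *: F x + a x *: 'D_v F x)) => //.
  by move=> x Ax; case: (differentiable_derive_scale (da x Ax) (dF x Ax)) => _ ->.
by apply: CkD => //; apply: IH => //; apply: CkW; split.
Qed.

Lemma Ck_linear_comp {V W W' : normedModType R} (A : set V) k (l : W -> W') (F : V -> W) :
  open A -> linear l -> continuous l -> Ck A k F -> Ck A k (l \o F).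
Proof.
move=> oA ll cl; pose L : {linear W -> W'} := HB.pack l (GRing.isLinear.Build _ _ _ _ _ ll).
have dl x : differentiable l x := @linear_differentiable _ _ _ L x cl.
elim: k F => [|k IH] F /=.
  by move=> cF x Ax; apply: continuous_comp; [apply: cF|apply: cl].
move=> [dF dDF]; split=> [x Ax|v]; first by apply: differentiable_comp; [apply: dF|].
apply: (@eq_Ck _ _ _ _ (l \o 'D_v F)) => //; last exact: IH.
move=> x Ax; have dFx := dF x Ax.
rewrite (deriveE v (differentiable_comp dFx (dl _))) (diff_comp dFx (dl _)) /=.
by rewrite (@diff_lin _ _ _ L) // deriveE.
Qed.

Lemma Ck_pair {V W1 W2 : normedModType R} (A : set V) k (f1 : V -> W1) (f2 : V -> W2) :
  open A -> Ck A k f1 -> Ck A k f2 -> Ck A k (fun x => (f1 x, f2 x)).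
Proof.
move=> oA; elim: k f1 f2 => [|k IH] f1 f2 /=.
  by move=> c1 c2 x Ax; apply: cvg_pair; [apply: c1|apply: c2].
move=> [d1 D1] [d2 D2]; split=> [x Ax|v].
  by apply: differentiable_pair; [apply: d1|apply: d2].
apply: (@eq_Ck _ _ _ _ (fun x => ('D_v f1 x, 'D_v f2 x))) => //; last exact: IH.
move=> x Ax; have dp := differentiable_pair (d1 x Ax) (d2 x Ax).
rewrite [RHS](deriveE v dp) (diff_pair (d1 x Ax) (d2 x Ax)) /=.
by rewrite (deriveE v (d1 x Ax)) (deriveE v (d2 x Ax)).
Qed.

End Smoothness.

Section FiniteDimensional.
Context {R : realType}.

Definition has_finite_basis (V : normedModType R) : Prop :=
  exists (I : finType) (e : I -> V) (c : I -> V -> R^o),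
    [/\ forall i, linear (c i), forall i, continuous (c i) &
        forall v, v = \sum_i c i v *: e i].

Lemma matrix_has_finite_basis a b : has_finite_basis 'M[R]_(a, b).
Proof.
exists ('I_a * 'I_b)%type, (fun p => delta_mx p.1 p.2),
  (fun p (A : 'M[R]_(a, b)) => (A p.1 p.2 : R^o)).
split=> [p r u v|p|A]; first by rewrite !mxE.
  exact: coord_continuous.
by rewrite {1}(matrix_sum_delta A) pair_big.
Qed.

Lemma prod_has_finite_basis (V1 V2 : normedModType R) :
  has_finite_basis V1 -> has_finite_basis V2 -> has_finite_basis (V1 * V2)%type.
Proof.
move=> [I1 [e1 [c1 [l1 k1 s1]]]] [I2 [e2 [c2 [l2 k2 s2]]]].
exists (I1 + I2)%type,
  (fun i => match i with inl i => (e1 i, 0) | inr i => (0, e2 i) end),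
  (fun i (p : V1 * V2) => match i with inl i => c1 i p.1 | inr i => c2 i p.2 end).
split=> [[i|i] r u v|[i|i] p|[v1 v2]] /=.
- exact: l1.
- exact: l2.
- by apply: (@continuous_comp _ _ _ fst); [exact: cvg_fst|exact: k1].
- by apply: (@continuous_comp _ _ _ snd); [exact: cvg_snd|exact: k2].
have fst_sum (I : finType) (F : I -> V1 * V2) : (\sum_i F i).1 = \sum_i (F i).1.
  exact: (big_morph fst (fun _ _ => erefl) erefl).
have snd_sum (I : finType) (F : I -> V1 * V2) : (\sum_i F i).2 = \sum_i (F i).2.
  exact: (big_morph snd (fun _ _ => erefl) erefl).
rewrite big_sumType [RHS]surjective_pairing /= !fst_sum !snd_sum /=.
under [X in _ + X]eq_bigr do rewrite scaler0.
under [X in (_, X + _)]eq_bigr do rewrite scaler0.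
by rewrite !big1_eq addr0 add0r -s1 -s2.
Qed.

Lemma finite_basis_linear_continuous {V W : normedModType R} {l : V -> W} :
  has_finite_basis V -> linear l -> continuous l.
Proof.
move=> [I [e [c [lc cc ce]]]] ll.
pose L : {linear V -> W} := HB.pack l (GRing.isLinear.Build _ _ _ _ _ ll).
have -> : l = (fun v => \sum_i c i v *: l (e i)).
  apply/funext => v; rewrite {1}(ce v) -[l _]/(L _) linear_sum.
  by apply: eq_bigr => i _; rewrite linearZ.
have C0 : Ck setT 0 (fun v => \sum_i c i v *: l (e i)).
  apply: Ck_sum => [|i]; first exact: openT.
  by apply: CkZ; [exact: openT|move=> x _; apply: cc|exact: Ck_cst].
by move=> x; apply: C0.
Qed.

Lemma Ck_linear {V W : normedModType R} (A : set V) k (l : V -> W) :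
  has_finite_basis V -> linear l -> Ck A k l.
Proof.
move=> bV ll; have cl := finite_basis_linear_continuous bV ll.
pose L : {linear V -> W} := HB.pack l (GRing.isLinear.Build _ _ _ _ _ ll).
have dl x : differentiable l x := @linear_differentiable _ _ _ L x cl.
case: k => [|k] /=; first by move=> x _; apply: cl.
split=> [x _|v]; first exact: dl.
have -> : 'D_v l = fun=> l v by apply/funext => x; rewrite deriveE // (@diff_lin _ _ _ L).
exact: Ck_cst.
Qed.

Lemma Ck_comp {U V W : normedModType R} {A : set U} {B : set V} {k : nat} {g : U -> V}
    {f : V -> W} :
  has_finite_basis V -> open A -> (forall x, A x -> B (g x)) ->
  Ck B k f -> Ck A k g -> Ck A k (f \o g).
Proof.
move=> [I [e [c [lc cc ce]]]] oA gAB.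
elim: k f g gAB => [|k IH] f g gAB /=.
  by move=> cf cg x Ax; apply: continuous_comp; [apply: cg|apply: cf; apply: gAB].
move=> [df dDf] Cg; have [dg dDg] := Cg.
have dfg x : A x -> differentiable (f \o g) x.
  by move=> Ax; apply: differentiable_comp; [apply: dg|apply: df; apply: gAB].
split=> // v.
(* Chain rule, with the direction [D_v g x] expanded in the basis [e]. *)
apply: (@eq_Ck _ _ _ _ _ (fun x => \sum_i c i ('D_v g x) *: 'D_(e i) f (g x))) => //.
  move=> x Ax; have dfgx := df _ (gAB x Ax).
  rewrite (deriveE v (dfg x Ax)) (diff_comp (dg x Ax) dfgx) /= -(deriveE v (dg x Ax)).
  rewrite [in RHS](ce ('D_v g x)) linear_sum.
  by apply: eq_bigr => i _; rewrite linearZ /= (deriveE (e i) dfgx).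
apply: Ck_sum => // i; apply: CkZ => //.
  exact: Ck_linear_comp.
exact: (IH ('D_(e i) f) g gAB (dDf (e i)) (CkW Cg)).
Qed.

End FiniteDimensional.

Ltac finite_basis :=
  by repeat first [apply: prod_has_finite_basis | apply: matrix_has_finite_basis].

Section Windows.
Context {R : realType}.

Lemma win_cst p (c : 'rV[R]_p) a L : win (fun=> c) a L = cwin L c.
Proof. by apply/matrixP => i j; rewrite !mxE. Qed.

Lemma rowsub_cwin p L L' (s : 'I_L' -> 'I_L) (c : 'rV[R]_p) :
  rowsub s (cwin L c) = cwin L' c.
Proof. by apply/matrixP => i j; rewrite !mxE. Qed.

Lemma linear_rowsub p L L' (s : 'I_L' -> 'I_L) : linear (rowsub s : 'M[R]_(L, p) -> _).
Proof. by move=> a A B; apply/matrixP => i j; rewrite !mxE. Qed.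

Lemma rev_cwin p L (c : 'rV[R]_p) : rev_rows (cwin L c) = cwin L c.
Proof. by apply/matrixP => i j; rewrite !mxE. Qed.

Lemma win_ball p (y : int -> 'rV[R]_p) (c : 'rV[R]_p) (d : R) a L :
  (forall k, ball (c : ('rV[R]_p : normedModType R)) d (y k)) ->
  ball (cwin L c : ('M[R]_(L, p) : normedModType R)) d (win y a L).
Proof.
move=> yb; split=> [|i j]; first by have [] := yb 0.
by rewrite !mxE; apply: (yb _).2.
Qed.

End Windows.

Section SmoothNear.
Context {R : realType}.

Lemma smooth_near_continuous {V W : normedModType R} {p : V} {f : V -> W} :
  smooth_near p f -> {for p, continuous f}.
Proof. by move=> [A [_ Ap sf]]; apply: (sf 0%N). Qed.

Lemma smooth_near_pair {V W1 W2 : normedModType R} (p : V) (f1 : V -> W1)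
    (f2 : V -> W2) :
  smooth_near p f1 -> smooth_near p f2 -> smooth_near p (fun x => (f1 x, f2 x)).
Proof.
move=> [A1 [oA1 A1p s1]] [A2 [oA2 A2p s2]]; have oA := openI oA1 oA2.
exists (A1 `&` A2); split=> // k; apply: Ck_pair => //.
  by apply: Ck_subset (s1 k); apply: subIsetl.
by apply: Ck_subset (s2 k); apply: subIsetr.
Qed.

Lemma smooth_near_linear {V W : normedModType R} (p : V) (l : V -> W) :
  has_finite_basis V -> linear l -> smooth_near p l.
Proof. by move=> bV ll; exists setT; split=> [|//|k]; [exact: openT|exact: Ck_linear]. Qed.

Lemma smooth_near_comp {U V W : normedModType R} (p : U) (g : U -> V) (f : V -> W) :
  has_finite_basis V -> smooth_near p g -> smooth_near (g p) f ->
  smooth_near p (f \o g).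
Proof.
move=> bV [B [oB Bp sg]] [A [oA Agp sf]].
have oD : open (B `&` g @^-1` A) by apply: openI_preimage => // x Bx; apply: (sg 0%N).
exists (B `&` g @^-1` A); split=> // k.
apply: (Ck_comp bV oD _ (sf k)); first by move=> x [].
by apply: Ck_subset (sg k); apply: subIsetl.
Qed.

Lemma smooth_near_comp_rowsub {W : normedModType R} p L L' (s : 'I_L' -> 'I_L)
    (F : 'M[R]_(L', p) -> W) (c : 'rV[R]_p) :
  smooth_near (cwin L' c) F -> smooth_near (cwin L c) (F \o rowsub s).
Proof.
move=> sF; apply: smooth_near_comp; first finite_basis.
  by apply: smooth_near_linear; [finite_basis|apply: linear_rowsub].
by rewrite rowsub_cwin.
Qed.

End SmoothNear.

Section Systems.
Context {R : realType} {n m : nat}.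
Local Notation X := ('rV[R]_n : normedModType R).
Local Notation U := ('rV[R]_m : normedModType R).

Definition trajectory (F : X * U -> X) (x : int -> X) (u : int -> U) : Prop :=
  forall k, x (k + 1) = F (x k, u k).

Definition flat_of (G : X * U -> U) {Q1 Q2 : nat}
    (phi : 'M[R]_(Q1, m) * X * U * 'M[R]_(Q2, m) -> U) (x : int -> X) (u : int -> U) :
    int -> U :=
  fun k => phi (win (fun l => G (x l, u l)) (k - Q1%:Z) Q1, x k, u k, win u (k + 1) Q2).

Definition state_of {R1 R2 : nat} (Fx : 'M[R]_(R1 + R2, m) -> X) (y : int -> U) :
    int -> X :=
  fun k => Fx (win y (k - R1%:Z) (R1 + R2)).

Definition input_of {R1 R2 : nat} (Fu : 'M[R]_((R1 + R2).+1, m) -> U) (y : int -> U) :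
    int -> U :=
  fun k => Fu (win y (k - R1%:Z) (R1 + R2).+1).

Lemma reverse_trajectory {F F' : X * U -> X} {G G' : X * U -> U} {A A' : set (X * U)} :
  (forall p, A p -> A' (F p, G p) /\ (F' (F p, G p), G' (F p, G p)) = p) ->
  forall x u, trajectory F x u -> (forall k, A (x k, u k)) ->
  let z k := F (x (- k), u (- k)) in let v k := G (x (- k), u (- k)) in
  [/\ trajectory F' z v, forall k, A' (z k, v k) &
      forall k, (F' (z k, v k), G' (z k, v k)) = (x (- k), u (- k))].
Proof.
move=> HA x u trx Axu z v.
have back k : (F' (z k, v k), G' (z k, v k)) = (x (- k), u (- k)) by apply: (HA _ _).2.
split=> [k||//]; last by move=> k; apply: (HA _ _).1.
rewrite /z (_ : - (k + 1) = - k - 1) ?opprD // -trx subrK -/(z k).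
by case: (back k) => ->.
Qed.

Lemma flat_of_hat_phi {psix : X * U -> X} {psiu G : X * U -> U} {Q1 Q2 : nat}
    (phi : 'M[R]_(Q1, m) * X * U * 'M[R]_(Q2, m) -> U) {z x : int -> X} {v u : int -> U} :
  (forall l, (psix (z l, v l), psiu (z l, v l)) = (x (- l), u (- l))) ->
  (forall l, G (x l, u l) = v (- l)) ->
  forall k, flat_of psiu (hat_phi psix psiu phi) z v k = flat_of G phi x u (- k).
Proof.
move=> back hv k; rewrite /flat_of /hat_phi; case: (back k) => -> ->.
congr (phi (_, _, _, _)); apply/matrixP => i j; rewrite !mxE.
- by rewrite hv; congr (v _ 0 j); have := ltn_ord i; rewrite /=; lia.
- case: (back (k - Q2%:Z + (rev_ord i : nat)%:Z)) => _ ->.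
  by congr (u _ 0 j); have := ltn_ord i; rewrite /=; lia.
Qed.

Lemma state_of_Fz_of {R1 R2 : nat} {Fx : 'M[R]_(R1 + R2, m) -> X} {y yh : int -> U} :
  (forall l, y l = yh (- l)) ->
  forall k, state_of (Fz_of Fx) yh k = state_of Fx y (1 - k).
Proof.
move=> hy k; rewrite /state_of /Fz_of; congr Fx; apply/matrixP => i j; rewrite !mxE hy.
by congr (yh _ 0 j); have := ltn_ord i; rewrite /=; lia.
Qed.

Lemma input_of_Fv_of {G : X * U -> U} {R1 R2 : nat} {Fx : 'M[R]_(R1 + R2, m) -> X}
    {Fu : 'M[R]_((R1 + R2).+1, m) -> U} {y yh : int -> U} :
  (forall l, y l = yh (- l)) ->
  forall k, input_of (Fv_of G Fx Fu) yh k = G (state_of Fx y (- k), input_of Fu y (- k)).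
Proof.
move=> hy k; rewrite /input_of /state_of /Fv_of.
by congr (G (Fx _, Fu _)); apply/matrixP => i j; rewrite !mxE hy;
  congr (yh _ 0 j); have := ltn_ord i; rewrite /=; lia.
Qed.

Lemma param_at_equilibrium {F : X * U -> X} {G : X * U -> U} {x0 : X} {u0 : U}
    {N : set (X * U)} {Q1 Q2 : nat} (phi : 'M[R]_(Q1, m) * X * U * 'M[R]_(Q2, m) -> U)
    {R1 R2 : nat} {Fx : 'M[R]_(R1 + R2, m) -> X} {Fu : 'M[R]_((R1 + R2).+1, m) -> U} :
  F (x0, u0) = x0 -> N (x0, u0) ->
  (forall x u, trajectory F x u -> (forall k, N (x k, u k)) ->
     forall k, x k = state_of Fx (flat_of G phi x u) k /\
               u k = input_of Fu (flat_of G phi x u) k) ->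
  let y0 := phi (cwin Q1 (G (x0, u0)), x0, u0, cwin Q2 u0) in
  Fx (cwin (R1 + R2) y0) = x0 /\ Fu (cwin (R1 + R2).+1 y0) = u0.
Proof.
move=> Fx0 N0 param y0.
have flat0 : flat_of G phi (fun=> x0) (fun=> u0) = fun=> y0.
  by apply/funext => k; rewrite /flat_of !win_cst.
have := param (fun=> x0) (fun=> u0) (fun=> esym Fx0) (fun=> N0) 0.
by rewrite flat0 /state_of /input_of !win_cst => -[<- <-].
Qed.

Lemma smooth_near_hat_phi {psix : X * U -> X} {psiu : X * U -> U} {W' : set (X * U)}
    {Q1 Q2 : nat} {phi : 'M[R]_(Q1, m) * X * U * 'M[R]_(Q2, m) -> U}
    {E : 'M[R]_(Q2, m)} {z : X} {v : U} {V : 'M[R]_(Q1, m)} :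
  open W' -> W' (z, v) -> smooth_on W' psix -> smooth_on W' psiu ->
  smooth_near (rev_rows V, psix (z, v), psiu (z, v), rev_rows E) phi ->
  smooth_near (E, z, v, V) (hat_phi psix psiu phi).
Proof.
move=> oW' W'zv spx spu sphi.
pose zv (w : 'M[R]_(Q2, m) * X * U * 'M[R]_(Q1, m)) : X * U := (w.1.1.2, w.1.2).
have near_zv (W : normedModType R) (h : X * U -> W) :
    smooth_on W' h -> smooth_near (E, z, v, V) (h \o zv).
  move=> sh; apply: smooth_near_comp; [finite_basis| |by exists W'].
  by apply: smooth_near_linear; [finite_basis|].
have -> : hat_phi psix psiu phi = phi \o
    (fun w => (rev_rows w.2, psix (zv w), psiu (zv w), rev_rows w.1.1.1)).
  by apply/funext => -[[[? ?] ?] ?].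
apply: smooth_near_comp sphi => //; first finite_basis.
apply: smooth_near_pair; [apply: smooth_near_pair; [apply: smooth_near_pair|]|].
all: try exact: near_zv.
all: apply: smooth_near_linear; [finite_basis|].
all: by move=> a w w'; apply/matrixP => i j; rewrite !mxE.
Qed.

Lemma smooth_near_Fz_of R1 R2 (Fx : 'M[R]_(R1 + R2, m) -> X) (y0 : U) :
  smooth_near (cwin (R1 + R2) y0) Fx -> smooth_near (cwin (R2 + R1) y0) (Fz_of Fx).
Proof. exact: smooth_near_comp_rowsub. Qed.

Lemma smooth_near_Fv_of {G : X * U -> U} {W : set (X * U)} {R1 R2 : nat}
    {Fx : 'M[R]_(R1 + R2, m) -> X} {Fu : 'M[R]_((R1 + R2).+1, m) -> U} {y0 : U} :
  open W -> smooth_on W G -> W (Fx (cwin (R1 + R2) y0), Fu (cwin (R1 + R2).+1 y0)) ->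
  smooth_near (cwin (R1 + R2) y0) Fx -> smooth_near (cwin (R1 + R2).+1 y0) Fu ->
  smooth_near (cwin (R2 + R1).+1 y0) (Fv_of G Fx Fu).
Proof.
move=> oW sG W0 sFx sFu.
apply: (@smooth_near_comp _ _ _ _ _ (fun A => (Fx (rowsub _ A), Fu (rowsub _ A)))).
- finite_basis.
- by apply: smooth_near_pair; apply: smooth_near_comp_rowsub.
- by exists W; rewrite /= !rowsub_cwin.
Qed.

Lemma ball_param_in {W : set (X * U)} {R1 R2 : nat} {Fx : 'M[R]_(R1 + R2, m) -> X}
    {Fu : 'M[R]_((R1 + R2).+1, m) -> U} {y0 : U} :
  open W -> W (Fx (cwin (R1 + R2) y0), Fu (cwin (R1 + R2).+1 y0)) ->
  smooth_near (cwin (R1 + R2) y0) Fx -> smooth_near (cwin (R1 + R2).+1 y0) Fu ->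
  exists2 d : R, 0 < d & forall y, (forall k, ball y0 d (y k)) ->
    forall k, W (state_of Fx y k, input_of Fu y k).
Proof.
move=> oW W0 sFx sFu.
pose T := (('M[R]_(R1 + R2, m) : normedModType R) *
           ('M[R]_((R1 + R2).+1, m) : normedModType R))%type.
have sF : smooth_near ((cwin (R1 + R2) y0, cwin (R1 + R2).+1 y0) : T)
    (fun p : T => (Fx p.1, Fu p.2)).
  apply: smooth_near_pair; [apply: (@smooth_near_comp _ _ _ _ _ fst Fx) |
                            apply: (@smooth_near_comp _ _ _ _ _ snd Fu)] => //;
    first [finite_basis|by apply: smooth_near_linear; [finite_basis|]].
have /nbhs_ballP [d d0 Wd] := smooth_near_continuous sF _ (open_nbhs_nbhs (conj oW W0)).
by exists d => // y yb k; apply: (Wd (_, _)); split; apply: win_ball.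
Qed.

End Systems.

Section Associated.
Context {R : realType} {n m : nat}.
Local Notation X := ('rV[R]_n : normedModType R).
Local Notation U := ('rV[R]_m : normedModType R).

Context {f psix : X * U -> X} {g psiu : X * U -> U} {W W' : set (X * U)}.
Hypothesis HW : forall p, W p -> W' (f p, g p) /\ (psix (f p, g p), psiu (f p, g p)) = p.
Hypothesis HW' :
  forall q, W' q -> W (psix q, psiu q) /\ (f (psix q, psiu q), g (psix q, psiu q)) = q.
Context {x0 : X} {u0 : U}.
Hypotheses (oW : open W) (oW' : open W') (W0 : W (x0, u0)) (fx0 : f (x0, u0) = x0).
Hypotheses (sg : smooth_on W g) (spx : smooth_on W' psix) (spu : smooth_on W' psiu).

Variables (Q1 Q2 : nat) (phi : 'M[R]_(Q1, m) * X * U * 'M[R]_(Q2, m) -> U)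
  (R1 R2 : nat) (Fx : 'M[R]_(R1 + R2, m) -> X) (Fu : 'M[R]_((R1 + R2).+1, m) -> U).
Local Notation hphi := (hat_phi psix psiu phi).
Local Notation Fz := (Fz_of Fx).
Local Notation Fv := (Fv_of g Fx Fu).

Lemma associated_traj_param (N : set (X * U)) :
  (forall x u, trajectory f x u -> (forall k, N (x k, u k)) ->
     forall k, x k = state_of Fx (flat_of g phi x u) k /\
               u k = input_of Fu (flat_of g phi x u) k) ->
  forall z v, trajectory psix z v ->
    (forall k, (W' `&` (fun q => (psix q, psiu q)) @^-1` N) (z k, v k)) ->
  forall k, z k = state_of Fz (flat_of psiu hphi z v) k /\
            v k = input_of Fv (flat_of psiu hphi z v) k.
Proof.
move=> param z v trz Nzv k.
have [trx _ fg_xu] := reverse_trajectory HW' _ _ trz (fun k => (Nzv k).1).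
set x := fun l => psix _ in trx fg_xu; set u := fun l => psiu _ in trx fg_xu.
have Nxu l : N (x l, u l) := (Nzv (- l)).2.
have back l : (psix (z l, v l), psiu (z l, v l)) = (x (- l), u (- l)).
  by rewrite /x /u opprK.
have hv l : g (x l, u l) = v (- l) by case: (fg_xu l).
have y_yh l : flat_of g phi x u l = flat_of psiu hphi z v (- l).
  by rewrite (flat_of_hat_phi phi back hv) opprK.
have [<- <-] : (f (x (- k), u (- k)), g (x (- k), u (- k))) = (z k, v k).
  by rewrite fg_xu opprK.
rewrite (state_of_Fz_of y_yh) (input_of_Fv_of y_yh) -trx addrC.
by have [<- _] := param x u trx Nxu (1 - k); have [<- <-] := param x u trx Nxu (- k).
Qed.

Lemma associated_flat_traj (N : set (X * U)) (M : set U) :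
  (forall y, (forall k, M (y k)) ->
     [/\ trajectory f (state_of Fx y) (input_of Fu y),
         forall k, N (state_of Fx y k, input_of Fu y k) &
         forall k, y k = flat_of g phi (state_of Fx y) (input_of Fu y) k]) ->
  (forall y, (forall k, M (y k)) -> forall k, W (state_of Fx y k, input_of Fu y k)) ->
  forall yh, (forall k, M (yh k)) ->
    [/\ trajectory psix (state_of Fz yh) (input_of Fv yh),
        forall k, (W' `&` (fun q => (psix q, psiu q)) @^-1` N)
                    (state_of Fz yh k, input_of Fv yh k) &
        forall k, yh k = flat_of psiu hphi (state_of Fz yh) (input_of Fv yh) k].
Proof.
move=> param Wparam yh Myh; pose y l := yh (- l).
have My k : M (y k) := Myh (- k).
have [trx Nxu yflat] := param y My.
have y_yh l : y l = yh (- l) by [].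
set x := state_of Fx y in trx Nxu yflat *; set u := input_of Fu y in trx Nxu yflat *.
have [trz W'zv back] := reverse_trajectory HW _ _ trx (Wparam y My).
have -> : state_of Fz yh = fun k => f (x (- k), u (- k)).
  by apply/funext => k; rewrite (state_of_Fz_of y_yh) -trx addrC.
have -> : input_of Fv yh = fun k => g (x (- k), u (- k)).
  by apply/funext => k; rewrite (input_of_Fv_of y_yh).
split=> // k; first by split=> //; rewrite /preimage /= back.
have hv l : g (x l, u l) = g (x (- - l), u (- - l)) by rewrite opprK.
by rewrite (flat_of_hat_phi phi back hv) -yflat y_yh opprK.
Qed.

Lemma flat_param_associated :
  flat_param f g x0 u0 phi Fx Fu -> flat_param psix psiu x0 (g (x0, u0)) hphi Fz Fv.
Proof.
move=> [sphi sFx sFu [N [M [[oN N0] [oM M0] param traj]]]].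
set v0 := g (x0, u0); set y0 := phi _ in sphi sFx sFu M0 param traj.
have [W'0 [px0 pu0]] : W' (x0, v0) /\ psix (x0, v0) = x0 /\ psiu (x0, v0) = u0.
  by have [] := HW _ W0; rewrite fx0 => ? [-> ->].
have [Fx0 Fu0] := param_at_equilibrium (G := g) phi fx0 N0 param.
have W0' : W (Fx (cwin (R1 + R2) y0), Fu (cwin (R1 + R2).+1 y0)) by rewrite Fx0 Fu0.
have [d d0 Wd] := ball_param_in oW W0' sFx sFu.
rewrite /flat_param /= !rev_cwin px0 pu0 -/y0; split.
- by apply: (smooth_near_hat_phi oW' W'0 spx spu); rewrite !rev_cwin px0 pu0.
- exact: smooth_near_Fz_of.
- exact: smooth_near_Fv_of oW sg W0' sFx sFu.
exists (W' `&` (fun q => (psix q, psiu q)) @^-1` N), (M `&` ball y0 d); split.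
- split; last by split=> //=; rewrite px0 pu0.
  apply: openI_preimage => // q W'q; apply: smooth_near_continuous.
  by apply: smooth_near_pair; exists W'.
- by split; [exact: openI (ball_open _ _)|split=> //; exact: ballxx].
- exact: associated_traj_param.
- apply: associated_flat_traj => [y My|y My].
    by apply: traj => k; case: (My k).
  by apply: Wd => k; case: (My k).
Qed.

End Associated.

Theorem theorem3 (R : realType) (n m : nat)
  (f : 'rV[R]_n * 'rV[R]_m -> 'rV[R]_n) (g : 'rV[R]_n * 'rV[R]_m -> 'rV[R]_m)
  (psix : 'rV[R]_n * 'rV[R]_m -> 'rV[R]_n) (psiu : 'rV[R]_n * 'rV[R]_m -> 'rV[R]_m)
  (x0 : 'rV[R]_n) (u0 : 'rV[R]_m) :
  (* f and g are smooth *)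
  smooth_on setT f -> smooth_on setT g ->
  (* rank (d_u f) = m *)
  (forall (x : 'rV[R]_n) (u w : 'rV[R]_m),
      'D_w (fun u' => f (x, u')) u = 0 -> w = 0) ->
  (* submersivity: rank (d_(x,u) f) = n *)
  (forall (p : 'rV[R]_n * 'rV[R]_m) (dx : 'rV[R]_n),
      exists d : 'rV[R]_n * 'rV[R]_m, 'D_d f p = dx) ->
  (* (x0,u0) is an equilibrium *)
  f (x0, u0) = x0 ->
  (* (x,u) |-> (f,g) is a local diffeomorphism around (x0,u0), with
     smooth local inverse (psix, psiu) *)
  (exists (W W' : set ('rV[R]_n * 'rV[R]_m : normedModType R)),
     [/\ open W /\ open W', W (x0, u0) /\ W' (f (x0, u0), g (x0, u0)),
         forall p, W p -> W' (f p, g p) /\ (psix (f p, g p), psiu (f p, g p)) = p,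
         forall q, W' q -> W (psix q, psiu q) /\ (f (psix q, psiu q), g (psix q, psiu q)) = q &
         smooth_on W' psix /\ smooth_on W' psiu]) ->
  [/\
  (* forward direction, with the explicit flat output and parameterization *)
    (forall (Q1 Q2 : nat) (phi : 'M[R]_(Q1, m) * 'rV[R]_n * 'rV[R]_m * 'M[R]_(Q2, m) -> 'rV[R]_m)
            (R1 R2 : nat) (Fx : 'M[R]_(R1 + R2, m) -> 'rV[R]_n)
            (Fu : 'M[R]_((R1 + R2).+1, m) -> 'rV[R]_m),
       flat_param f g x0 u0 phi Fx Fu ->
       flat_param psix psiu x0 (g (x0, u0)) (hat_phi psix psiu phi)
                  (Fz_of Fx) (Fv_of g Fx Fu)),
  (* converse direction, with the explicit flat output *)
    (forall (Q2 Q1 : nat)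
            (hphi : 'M[R]_(Q2, m) * 'rV[R]_n * 'rV[R]_m * 'M[R]_(Q1, m) -> 'rV[R]_m),
       flat_output psix psiu x0 (g (x0, u0)) hphi ->
       flat_output f g x0 u0 (back_phi f g hphi)) &
  (* the associated system is flat iff the original system is flat *)
    (flat psix psiu x0 (g (x0, u0)) <-> flat f g x0 u0)].
Proof.
move=> sf sg _ _ fx0 [W [W' [[oW oW'] [W0 _] HW HW' [spx spu]]]].
have sgW : smooth_on W g by move=> k; apply: Ck_subset (sg k).
have sfW : smooth_on W f by move=> k; apply: Ck_subset (sf k).
have [W'0 [px0 pu0]] : W' (x0, g (x0, u0)) /\ psix (x0, g (x0, u0)) = x0 /\
                       psiu (x0, g (x0, u0)) = u0.
  by have [] := HW _ W0; rewrite fx0 => ? [-> ->].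
have forward := flat_param_associated HW HW' oW oW' W0 fx0 sgW spx spu.
(* the associated system of the associated system is the original one *)
have backward := flat_param_associated HW' HW oW' oW W'0 px0 spu sfW sgW.
have converse Q2 Q1
    (hphi : 'M[R]_(Q2, m) * 'rV[R]_n * 'rV[R]_m * 'M[R]_(Q1, m) -> 'rV[R]_m) :
    flat_output psix psiu x0 (g (x0, u0)) hphi ->
    flat_output f g x0 u0 (back_phi f g hphi).
  move=> [R2 [R1 [Fz [Fv /backward]]]]; rewrite pu0 => P.
  by exists R1, R2, (Fz_of Fz), (Fv_of psiu Fz Fv).
split; [exact: forward|exact: converse|split].
  by move=> [Q2 [Q1 [hphi /converse]]]; exists Q1, Q2, (back_phi f g hphi).
move=> [Q1 [Q2 [phi [R1 [R2 [Fx [Fu /forward]]]]]]].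
by exists Q2, Q1, (hat_phi psix psiu phi), R2, R1, (Fz_of Fx), (Fv_of g Fx Fu).
Qed.
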